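(* Let $X,Y$ be Banach spaces and $f:X\to Y$ a map. Suppose there exist a closed ball $B_r$ of radius $r>0$ in $X$, a closed ball $B_s$ of radius $s\ge0$ in $Y$, and a compact set $K\subseteq Y$ such that $f(B_r)\subseteq K+B_s$. Then $$\varphi_f(r):=\inf\{\|f(x)-f(y)\|: x,y\in X,\ \|x-y\|\ge r\}\le 2s.$$
   Context: All Banach spaces are real and infinite-dimensional. $K+B_s=\{k+b: k\in K, b\in B_s\}$. *)

From HB Require Import structures.
From mathcomp Require Import all_boot all_order all_algebra.
From mathcomp Require Import all_classical all_reals all_analysis.
Set Implicit Arguments. Unset Strict Implicit. Unset Printing Implicit Defensive.
Import Order.TTheory GRing.Theory Num.Theory numFieldNormedType.Exports.
Local Open Scope classical_set_scope.
Local Open Scope ring_scope.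

(* Closed ball {y | ||y - c|| <= r} in a normed space (also correct for r = 0). *)
Definition cball {R : realType} {V : normedModType R} (c : V) (r : R) : set V :=
  closed_ball_ (fun v : V => `|v|) c r.

Definition minkowski_sum {R : realType} {V : normedModType R} (A B : set V) : set V :=
  [set z | exists a b, A a /\ B b /\ z = a + b].

Definition infinite_dim {R : realType} (V : normedModType R) : Prop :=
  forall s : seq V, exists x : V,
    forall c : seq R, x <> \sum_(i < size s) c`_i *: s`_i.

Definition phi_mod {R : realType} {X Y : normedModType R} (f : X -> Y) (r : R) : R :=
  inf [set d | exists x y : X, `|x - y| >= r /\ d = `|f x - f y|].

(* Exact Riesz lemma: the distance from a vector to the span of finitely
   many vectors is attained (by induction on the family: the new coefficient
   only ranges over a compact interval, on which the Lipschitz function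
   t |-> dist (v - t w, span s) attains its minimum).  Hence an
   infinite-dimensional X contains unit vectors u_n with |u_n - u_m| >= 1, and
   the points x_n = a + r u_n of the ball are pairwise at distance >= r.
   Writing f x_n = k_n + b_n with k_n in K and |b_n - b| <= s, compactness of K
   yields n <> m with |k_n - k_m| < e, whence |f x_n - f x_m| < 2 s + e. *)

From HB Require Import structures.
From mathcomp Require Import all_boot all_order all_algebra.
From mathcomp Require Import all_classical all_reals all_analysis.
From mathcomp Require Import lra.
Set Implicit Arguments. Unset Strict Implicit. Unset Printing Implicit Defensive.
Import Order.TTheory GRing.Theory Num.Theory numFieldNormedType.Exports.
Local Open Scope classical_set_scope.
Local Open Scope ring_scope.

Lemma klipschitz_continuous (R : realFieldType) (V W : normedModType R)
    (k : R) (f : V -> W) :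
  k.-lipschitz f -> continuous f.
Proof.
move=> fk x; apply/cvgrPdist_le => e e0.
have k1 : 0 < `|k| + 1 by rewrite ltr_wpDl.
near=> y; apply: le_trans (fk (x, y) _) _ => //=.
have xy : `|x - y| <= e / (`|k| + 1).
  by near: y; apply: cvgr_dist_le; [exact: cvg_id | rewrite divr_gt0].
apply: le_trans (ler_wpM2r (normr_ge0 _) (ler_norm k)) _.
apply: le_trans (ler_wpM2l (normr_ge0 _) xy) _.
by rewrite mulrA ler_pdivrMr // mulrC ler_wpM2l ?ltW // ltrDl.
Unshelve. all: by end_near. Qed.

Section BestApproximation.
Variables (R : realType) (V : normedModType R).
Implicit Types (s : seq V) (v w : V) (c d : nat -> R) (t : R).

Definition lincomb s c : V := \sum_(i < size s) c i *: s`_i.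

Definition best_approx s v c :=
  forall c', `|v - lincomb s c| <= `|v - lincomb s c'|.

Definition coef_cons t c : nat -> R := fun i => if i is j.+1 then c j else t.

Lemma lincomb_cons w s c : lincomb (w :: s) c = c 0%N *: w + lincomb s (c \o succn).
Proof. by rewrite /lincomb /= big_ord_recl. Qed.

Lemma lincomb_coef_cons w s t c :
  lincomb (w :: s) (coef_cons t c) = t *: w + lincomb s c.
Proof. by rewrite lincomb_cons. Qed.

Lemma lincombD s c d : lincomb s (c \+ d) = lincomb s c + lincomb s d.
Proof. by rewrite /lincomb -big_split; apply: eq_bigr => i _; rewrite scalerDl. Qed.

Lemma lincombZ s t c : lincomb s (fun i => t * c i) = t *: lincomb s c.
Proof. by rewrite /lincomb scaler_sumr; apply: eq_bigr => i _; rewrite scalerA. Qed.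

Lemma lincomb0 s : lincomb s (fun=> 0) = 0.
Proof. by rewrite /lincomb big1 // => i _; rewrite scale0r. Qed.

Lemma lincomb_delta s i : (i < size s)%N -> lincomb s (fun j => (j == i)%:R) = s`_i.
Proof.
move=> ilt; rewrite /lincomb (bigD1 (Ordinal ilt)) //= eqxx scale1r big1 ?addr0 //.
by move=> j ji; rewrite -val_eqE /= in ji; rewrite (negbTE ji) scale0r.
Qed.

Lemma best_approx_cons_span w s v cw c : w = lincomb s cw ->
  best_approx s v c -> best_approx (w :: s) v (coef_cons 0 c).
Proof.
move=> -> vc c'; rewrite lincomb_coef_cons scale0r add0r lincomb_cons.
by rewrite -lincombZ -lincombD; exact: vc.
Qed.

Lemma best_approx_scale_le s w cw t c : best_approx s w cw ->
  `|t| * `|w - lincomb s cw| <= `|t *: w - lincomb s c|.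
Proof.
move=> wcw; have [->|t0] := eqVneq t 0; first by rewrite normr0 mul0r.
have -> : t *: w - lincomb s c = t *: (w - lincomb s (fun i => t^-1 * c i)).
  by rewrite lincombZ scalerBr scalerA mulfV // scale1r.
by rewrite normrZ ler_wpM2l.
Qed.

Lemma best_approx_far s w cw v t c : best_approx s w cw ->
  2 * `|v| <= `|t| * `|w - lincomb s cw| -> `|v| <= `|v - t *: w - lincomb s c|.
Proof.
move=> wcw vt.
have := best_approx_scale_le t (fun i => -1 * c i) wcw.
rewrite lincombZ scaleN1r opprK => twc.
have := ler_normB v (v - (t *: w + lincomb s c)).
rewrite opprB addrC subrK opprD addrA; lra.
Qed.

Lemma best_approx_dist_lipschitz s w v (ct : R -> nat -> R) :
  (forall t, best_approx s (v - t *: w) (ct t)) ->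
  `|w|.-lipschitz (fun t => `|v - t *: w - lincomb s (ct t)|).
Proof.
move=> vct; set g := fun t => _.
have gle t t' : g t <= g t' + `|w| * `|t - t'|.
  apply: le_trans (vct t (ct t')) _.
  have -> : v - t *: w - lincomb s (ct t') =
            (v - t' *: w - lincomb s (ct t')) + (t' - t) *: w.
    by rewrite scalerBl [RHS]addrAC addrA subrK.
  by apply: le_trans (ler_normD _ _) _; rewrite normrZ mulrC (distrC t').
case=> t t' _ /=; rewrite ler_norml; have := gle t' t; rewrite distrC.
have := gle t t'; lra.
Qed.


Lemma best_approx_cons_free w s :
  (forall v, exists c, best_approx s v c) -> (forall c, w <> lincomb s c) ->
  forall v, exists c, best_approx (w :: s) v c.
Proof.
move=> approx wfree v.
have [cw wcw] := approx w.
have d0 : 0 < `|w - lincomb s cw|.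
  by rewrite normr_gt0 subr_eq0; apply/eqP; exact: wfree.
have [ct vct] := choice (fun t => approx (v - t *: w)).
set g := fun t => `|v - t *: w - lincomb s (ct t)|.
have gC : continuous g := klipschitz_continuous (best_approx_dist_lipschitz vct).
pose T := 2 * `|v| / `|w - lincomb s cw|.
have T0 : 0 <= T by rewrite divr_ge0 // ltW.
have [t0 _ gmin] : exists2 t0, t0 \in `[-T, T] &
    forall t, t \in `[-T, T] -> g t0 <= g t.
  by apply: EVT_min; [lra | exact: continuous_subspaceT].
exists (coef_cons t0 (ct t0)) => c'.
rewrite lincomb_coef_cons lincomb_cons !opprD !addrA -/(g t0).
(* Off [-T, T] the distance exceeds `|v| >= g 0: g t0 is the global minimum. *)
have [tT|] := boolP (c' 0%N \in `[-T, T]).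
  exact: le_trans (gmin _ tT) (vct _ _).
rewrite in_itv /= -ler_norml -ltNge => tT.
have g0 : g t0 <= `|v|.
  apply: le_trans (gmin 0 _) _; first by rewrite in_itv /= oppr_le0 T0.
  by apply: le_trans (vct 0 (fun=> 0)) _; rewrite scale0r lincomb0 !subr0.
apply: le_trans g0 (best_approx_far _ wcw _).
by rewrite -ler_pdivrMr //; exact: ltW.
Qed.

Lemma exists_best_approx s v : exists c, best_approx s v c.
Proof.
elim: s v => [|w s approx] v.
  by exists (fun=> 0) => c'; rewrite /lincomb !big_ord0.
have [[cw ->]|/forallNP wfree] := pselect (exists cw, w = lincomb s cw).
  have [c vc] := approx v.
  by exists (coef_cons 0 c); exact: best_approx_cons_span.
exact: best_approx_cons_free.
Qed.

End BestApproximation.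

Lemma size_iter_rcons (T : Type) (G : seq T -> T) n :
  size (iter n (fun s => rcons s (G s)) [::]) = n.
Proof. by elim: n => //= n IHn; rewrite size_rcons IHn. Qed.

Lemma nth_iter_rcons (T : Type) (G : seq T -> T) (x0 : T) n m : (m < n)%N ->
  nth x0 (iter n (fun s => rcons s (G s)) [::]) m =
  G (iter m (fun s => rcons s (G s)) [::]).
Proof.
elim: n => // n IHn; rewrite ltnS leq_eqVlt => /orP[/eqP ->|mn] /=.
  by rewrite nth_rcons size_iter_rcons ltnn eqxx.
by rewrite nth_rcons size_iter_rcons mn IHn.
Qed.

Section InfiniteDimensional.
Variables (R : realType) (V : normedModType R).
Hypothesis V_infinite_dim : infinite_dim V.

Lemma exists_unit_far_from_span (s : seq V) :
  exists u : V, `|u| = 1 /\ forall c, 1 <= `|u - lincomb s c|.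
Proof.
have [x xfree] := V_infinite_dim s.
have [c0 xc0] := exists_best_approx s x.
set d := `|x - lincomb s c0|.
have d0 : 0 < d.
  rewrite normr_gt0 subr_eq0; apply/eqP => xc0E; apply: (xfree (mkseq c0 (size s))).
  by rewrite xc0E; apply: eq_bigr => i _; rewrite nth_mkseq.
have di : 0 <= d^-1 by rewrite invr_ge0 ltW.
exists (d^-1 *: (x - lincomb s c0)); split.
  by rewrite normrZ ger0_norm // mulVf // gt_eqF.
move=> c.
have -> : d^-1 *: (x - lincomb s c0) - lincomb s c =
          d^-1 *: (x - lincomb s (c0 \+ (fun i => d * c i))).
  by rewrite lincombD lincombZ opprD addrA !scalerBr scalerA mulVf ?gt_eqF // scale1r.
by rewrite normrZ ger0_norm // -(mulVf (lt0r_neq0 d0)) ler_wpM2l.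
Qed.

Lemma exists_unit_separated_seq : exists u : nat -> V,
  (forall n, `|u n| = 1) /\ forall n m, n != m -> 1 <= `|u n - u m|.
Proof.
have [G Gfar] := choice exists_unit_far_from_span.
pose P n := iter n (fun s => rcons s (G s)) [::].
exists (fun n => G (P n)); split=> [n|]; first exact: (Gfar _).1.
have sep n m : (m < n)%N -> 1 <= `|G (P n) - G (P m)|.
  move=> mn; have := (Gfar (P n)).2 (fun j => (j == m)%:R).
  by rewrite lincomb_delta ?size_iter_rcons // nth_iter_rcons.
by move=> n m; rewrite neq_ltn => /orP[nm|mn]; [rewrite distrC|]; exact: sep.
Qed.

End InfiniteDimensional.

Lemma compact_seq_close_pair (R : realType) (Y : normedModType R) (K : set Y)
    (k : nat -> Y) : compact K -> (forall n, K (k n)) ->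
  forall e, 0 < e -> exists n m, n != m /\ `|k n - k m| < e.
Proof.
move=> cK Kk e e0.
have kK : (k @ \oo) K by exists 0%N => // n _; exact: Kk.
have [p [_ pclust]] := cK _ _ kK.
have near_p N : exists2 n, (N <= n)%N & `|p - k n| < e / 2.
  have kN : (k @ \oo) (k @` [set n | N <= n]%N) by exists N => // n; exists n.
  have [|_ [[n Nn <-] pkn]] := pclust _ _ kN (nbhsx_ballx p (e / 2) _).
    by rewrite divr_gt0.
  by exists n => //; move: pkn; rewrite -ball_normE.
have [n _ pkn] := near_p 0%N; have [m nm pkm] := near_p n.+1.
exists m, n; split; first by rewrite gtn_eqF.
rewrite -(subrK p (k m)) -addrA; apply: le_lt_trans (ler_normD _ _) _.
by rewrite distrC; lra.
Qed.

Lemma phi_mod_le (R : realType) (X Y : normedModType R) (f : X -> Y) (r : R) (x y : X) :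
  r <= `|x - y| -> phi_mod f r <= `|f x - f y|.
Proof.
move=> rxy; apply: ge_inf; last by exists x, y.
by exists 0 => _ [? [? [_ ->]]].
Qed.

Lemma dist_add_cball_le (R : realType) (V : normedModType R) (b : V) (s : R)
    (k1 k2 b1 b2 : V) : cball b s b1 -> cball b s b2 ->
  `|(k1 + b1) - (k2 + b2)| <= `|k1 - k2| + 2 * s.
Proof.
rewrite /cball /closed_ball_ /= => bb1 bb2.
have -> : k1 + b1 - (k2 + b2) = (k1 - k2) + ((b1 - b) + (b - b2)).
  by rewrite [b1 - b + _]addrA subrK opprD addrACA.
have := ler_normD (k1 - k2) (b1 - b + (b - b2)).
have := ler_normD (b1 - b) (b - b2); rewrite (distrC b1); lra.
Qed.

Theorem lemma4p3 (R : realType) (X Y : completeNormedModType R)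
  (hX : infinite_dim X) (hY : infinite_dim Y) (f : X -> Y)
  (a : X) (r : R) (b : Y) (s : R) (K : set Y)
  (hr : 0 < r) (hs : 0 <= s) (hK : compact K)
  (hf : f @` cball a r `<=` minkowski_sum K (cball b s)) :
  phi_mod f r <= 2 * s.
Proof.
have [u [u1 usep]] := exists_unit_separated_seq hX.
pose x n := a + r *: u n.
have xsep n m : n != m -> r <= `|x n - x m|.
  move=> nm; rewrite /x opprD addrACA subrr add0r -scalerBr normrZ gtr0_norm //.
  by rewrite -{1}(mulr1 r) ler_wpM2l ?usep // ltW.
have /choice[kb kbP] n : exists kbn : Y * Y,
    [/\ K kbn.1, cball b s kbn.2 & f (x n) = kbn.1 + kbn.2].
  have [|k [b' [Kk [bb' ->]]]] := hf (f (x n)); last by exists (k, b').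
  exists (x n) => //; rewrite /cball /closed_ball_ /= /x.
  by rewrite opprD addrA subrr sub0r normrN normrZ u1 mulr1 gtr0_norm.
have kK n : K (kb n).1 by case: (kbP n).
apply/ler_addgt0Pr => e e0.
have [n [m [nm kclose]]] := compact_seq_close_pair hK kK e0.
apply: le_trans (phi_mod_le f (xsep _ _ nm)) _.
have [_ bn ->] := kbP n; have [_ bm ->] := kbP m.
apply: le_trans (dist_add_cball_le _ _ bn bm) _; lra.
Qed.
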